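(* Let $n\ge 5$ and let $X$ be a nonempty set of Latin squares of order $n$ such that for every $L\in X$ and every permutation $\sigma$ of $[1,n]$, the square $\sigma(L)$ also lies in $X$. Let $m$ be the maximum inner distance of a square in $X$. Then for every integer $k\in[1,m]$ there exists a square in $X$ of inner distance $k$.
   Context: Symbols are $[1,n]=\{1,\dots,n\}$. For $a,b\in[1,n]$, $\mathrm{dist}(a,b)$ is the minimum of the residues of $a-b$ and $b-a$ modulo $n$ (in $[0,n-1]$). A Latin square of order $n$ is an $n\times n$ matrix with entries in $[1,n]$ in which every row and column contains each symbol exactly once. Cells are adjacent if they share an edge horizontally or vertically; the inner distance of a Latin square is the minimum of $\mathrm{dist}$ over symbols in adjacent cells. For a permutation $\sigma$ of $[1,n]$, $\sigma(L)$ is the square whose $(i,j)$ entry is $\sigma(m_{i,j})$. *)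

From mathcomp Require Import all_boot all_order all_fingroup.
Set Implicit Arguments. Unset Strict Implicit. Unset Printing Implicit Defensive.

(* Symbols [1,n] are represented by 'I_n (symbol s+1 <-> ordinal s);
   the cyclic distance is shift-invariant, so this is harmless. *)

Definition latin_square (n : nat) (L : {ffun 'I_n * 'I_n -> 'I_n}) : Prop :=
  (forall i : 'I_n, injective (fun j => L (i, j))) /\
  (forall j : 'I_n, injective (fun i => L (i, j))).

Definition cdist (n : nat) (a b : 'I_n) : nat :=
  minn ((a + n - b) %% n) ((b + n - a) %% n).

Definition adjacent (n : nat) (c d : 'I_n * 'I_n) : bool :=
  ((c.1 == d.1) && ((c.2.+1 == d.2) || (d.2.+1 == c.2))) ||
  ((c.2 == d.2) && ((c.1.+1 == d.1) || (d.1.+1 == c.1))).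

(* inner distance: minimum of dist over symbols in adjacent cells
   (default n is never attained when n >= 2, since all dists are < n). *)
Definition inner_distance (n : nat) (L : {ffun 'I_n * 'I_n -> 'I_n}) : nat :=
  \big[minn/n]_(p : ('I_n * 'I_n) * ('I_n * 'I_n) | adjacent p.1 p.2)
     cdist (L p.1) (L p.2).

Definition perm_square (n : nat) (s : {perm 'I_n}) (L : {ffun 'I_n * 'I_n -> 'I_n})
  : {ffun 'I_n * 'I_n -> 'I_n} := [ffun c => s (L c)].

From mathcomp Require Import all_boot all_order all_fingroup.
From mathcomp Require Import zify.
Set Implicit Arguments. Unset Strict Implicit. Unset Printing Implicit Defensive.

(* Swapping two cyclically consecutive symbols x and x+1 changes every cyclic
   distance, hence the inner distance, by at most one.  Starting from a square
   of inner distance m, repeatedly swap the symbol s in the second cell of the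
   first row with s+1: this walks s around the cycle until s+1 is the symbol of
   the first cell, and then the inner distance is at most 1.  All squares on
   the way lie in X, and since the inner distance drops by at most one per
   step, every value between m and 1 is attained. *)

Section CyclicDistance.
Variable n : nat.
Implicit Types x y z : 'I_n.

(* [fwd x y] counts the [ordS] steps from [x] to [y]. *)
Definition fwd x y : nat := (y + n - x) %% n.

Lemma fwdE x y : fwd x y = if x <= y then y - x else y + n - x.
Proof.
have := ltn_ord x; have := ltn_ord y; rewrite /fwd; case: (leqP x y) => xy *.
  by rewrite -addnBAC // modnDr modn_small //; lia.
by rewrite modn_small //; lia.
Qed.

Lemma ordSE x : nat_of_ord (ordS x) = if x.+1 < n then x.+1 else 0.
Proof.
change (x.+1 %% n = if x.+1 < n then x.+1 else 0).
case: (ltnP x.+1 n) => ?; first by rewrite modn_small.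
have -> : x.+1 = n by have := ltn_ord x; lia.
by rewrite modnn.
Qed.

Lemma fwdxx x : fwd x x = 0.
Proof. by rewrite fwdE leqnn subnn. Qed.

Lemma fwd_ordS x y : x != y -> fwd x y = (fwd (ordS x) y).+1.
Proof.
move=> xy; have {xy} : nat_of_ord x != y by []; have := ltn_ord x; have := ltn_ord y.
rewrite !fwdE ordSE; case: (ltnP x.+1 n) => ?;
  [case: (leqP x.+1 y) | case: (leqP 0 y)]; case: (leqP x y); move=> *; lia.
Qed.

Lemma cdist_fwd x y : cdist x y = minn (fwd y x) (fwd x y).
Proof. by []. Qed.

Lemma cdistC x y : cdist x y = cdist y x.
Proof. exact: minnC. Qed.

Lemma cdist_triangle x y z : cdist x z <= cdist x y + cdist y z.
Proof.
have := ltn_ord x; have := ltn_ord y; have := ltn_ord z.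
rewrite !cdist_fwd !fwdE.
case: (leqP x y) => ?; case: (leqP y x) => ?; case: (leqP x z) => ?;
case: (leqP z x) => ?; case: (leqP y z) => ?; case: (leqP z y) => ?; lia.
Qed.

Lemma cdistxx x : cdist x x = 0.
Proof. by rewrite cdist_fwd fwdxx. Qed.

Lemma cdist_le_fwd x y : cdist x y <= fwd x y.
Proof. exact: geq_minr. Qed.

Lemma cdist_ordS x : cdist x (ordS x) <= 1.
Proof.
apply: leq_trans (cdist_le_fwd _ _) _.
by have [<-|/fwd_ordS ->] := eqVneq x (ordS x); rewrite fwdxx.
Qed.

Lemma cdist_stepr x y z : cdist y z <= 1 -> cdist x z <= (cdist x y).+1.
Proof.
by move=> yz; apply: leq_trans (cdist_triangle x y z) _; rewrite -addn1 leq_add2l.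
Qed.

Lemma cdist_stepl x y z : cdist x y <= 1 -> cdist y z <= (cdist x z).+1.
Proof. by move=> xy; rewrite cdistC [cdist x z]cdistC; apply: cdist_stepr. Qed.

Lemma cdist_tperm_ordS x u v :
  cdist (tperm x (ordS x) u) (tperm x (ordS x) v) <= (cdist u v).+1.
Proof.
have Sx_x : cdist (ordS x) x <= 1 by rewrite cdistC cdist_ordS.
case: tpermP => [->|->|_ _]; case: tpermP => [->|->|_ _].
- by rewrite cdistxx.
- by rewrite cdistC.
- exact: cdist_stepl (cdist_ordS x).
- by rewrite cdistC.
- by rewrite cdistxx.
- exact: cdist_stepl Sx_x.
- exact: cdist_stepr (cdist_ordS x).
- exact: cdist_stepr Sx_x.
- exact: leqnSn.
Qed.

End CyclicDistance.

Lemma bigmin_leS (I : finType) (P : pred I) (F G : I -> nat) x0 :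
  (forall i, P i -> F i <= (G i).+1) ->
  \big[minn/x0]_(i | P i) F i <= (\big[minn/x0]_(i | P i) G i).+1.
Proof.
move=> FG; elim/big_rec2: _ => [|i a b Pi ab]; first exact: leqnSn.
by have := FG i Pi; lia.
Qed.

Section InnerDistance.
Variable n : nat.
Implicit Types L : {ffun 'I_n * 'I_n -> 'I_n}.

Lemma inner_distance_le_cdist L c d :
  adjacent c d -> inner_distance L <= cdist (L c) (L d).
Proof.
move=> cd; pose F p := cdist (L p.1) (L p.2).
exact: (@Order.TotalTheory.bigmin_le_cond _ nat _ n (c, d) _ F cd).
Qed.

Lemma inner_distance_tperm_ordS L x :
  inner_distance L <= (inner_distance (perm_square (tperm x (ordS x)) L)).+1.
Proof.
apply: bigmin_leS => p _; rewrite !ffunE.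
by rewrite -{1}[L p.1](tpermK x (ordS x)) -{1}[L p.2](tpermK x (ordS x)) cdist_tperm_ordS.
Qed.

End InnerDistance.

Definition shift_at n (c : 'I_n * 'I_n) (L : {ffun 'I_n * 'I_n -> 'I_n}) :
  {ffun 'I_n * 'I_n -> 'I_n} := perm_square (tperm (L c) (ordS (L c))) L.

Lemma fwd_shift_at n (L : {ffun 'I_n * 'I_n -> 'I_n}) c d g :
  fwd (L c) (L d) = g.+2 -> fwd (shift_at c L c) (shift_at c L d) = g.+1.
Proof.
have [<-|Lcd] := eqVneq (L c) (L d); first by rewrite fwdxx.
rewrite fwd_ordS // => -[gap].
have SLcd : ordS (L c) != L d by apply: contra_eq_neq gap => <-; rewrite fwdxx.
by rewrite !ffunE tpermL tpermD.
Qed.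

Section Descent.
Variables (n : nat) (X : {ffun 'I_n * 'I_n -> 'I_n} -> Prop).
Hypothesis X_perm : forall L (s : {perm 'I_n}), X L -> X (perm_square s L).
Variables (c d : 'I_n * 'I_n) (k : nat).
Hypotheses (adj_cd : adjacent c d) (k_gt0 : 0 < k).

Lemma inner_distance_descent L g :
  X L -> fwd (L c) (L d) = g.+1 -> k <= inner_distance L ->
  exists2 L', X L' & inner_distance L' = k.
Proof.
elim: g L => [|g IH] L XL gap kL.
  exists L => //; apply/eqP; rewrite eqn_leq kL andbT.
  apply: (leq_trans _ k_gt0); rewrite -gap.
  exact: leq_trans (inner_distance_le_cdist L adj_cd) (cdist_le_fwd _ _).
have [<-|Lk] := eqVneq (inner_distance L) k; first by exists L.
apply: (IH (shift_at c L)); [exact: X_perm | exact: fwd_shift_at |].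
have := inner_distance_tperm_ordS L (L c); rewrite -/(shift_at c L); lia.
Qed.

End Descent.

Theorem mainTheorem3 (n : nat) (X : {ffun 'I_n * 'I_n -> 'I_n} -> Prop)
  (m : nat) :
  5 <= n ->
  (forall L, X L -> latin_square L) ->
  (exists L, X L) ->
  (forall L (s : {perm 'I_n}), X L -> X (perm_square s L)) ->
  (exists2 L0, X L0 & inner_distance L0 = m) ->
  (forall L, X L -> inner_distance L <= m) ->
  forall k : nat, 1 <= k <= m -> exists2 L, X L & inner_distance L = k.
Proof.
move=> n_ge5 latin _ X_perm [L0 XL0 <-] _ k /andP[k_gt0 kL0].
have n_gt1 : 1 < n by apply: leq_trans n_ge5.
pose o0 : 'I_n := Ordinal (ltnW n_gt1); pose o1 : 'I_n := Ordinal n_gt1.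
have adj : adjacent (o0, o0) (o0, o1) by [].
have L0_neq : L0 (o0, o0) != L0 (o0, o1).
  by apply/eqP => /(latin L0 XL0).1 /(congr1 val).
exact: (inner_distance_descent X_perm adj k_gt0 XL0 (fwd_ordS L0_neq) kL0).
Qed.
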